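(* The SSL scheme $(\mathsf{Setup},\mathsf{Gen},\mathsf{Lessor},\mathsf{Run},\mathsf{Check})$ described in the context satisfies $\varepsilon$-correctness with $\varepsilon=\mathrm{negl}(\lambda)$.
   Context: Correctness: for all $C\in\mathcal{C}_\lambda$ with input length $n$, over $\mathsf{crs}\leftarrow\mathsf{Setup}(1^\lambda)$, $\mathsf{sk}\leftarrow\mathsf{Gen}(\mathsf{crs})$, $\rho_C\leftarrow\mathsf{Lessor}(\mathsf{sk},C)$: $\Pr[\forall x\in\{0,1\}^n: y=C(x)$ where $(\rho',y)\leftarrow\mathsf{Run}(\mathsf{crs},\rho_C,x)]\ge1-\varepsilon$ and $\Pr[\mathsf{Check}(\mathsf{sk},\rho_C)=1]\ge1-\varepsilon$. Ingredients: $\mathcal{C}=\{\mathcal{C}_\lambda\}$ is a class of $\mathcal{S}$-searchable circuits (a PPT $\mathcal{S}$ outputs, on $C$, an $x$ with $C(x)=1$) with distribution $\mathcal{D}_{\mathcal{C}}$; $\mathsf{qIHO}=(\mathsf{Obf},\mathsf{Eval})$ is a perfectly correct q-input-hiding obfuscator for $\mathcal{C}$; $\mathsf{shO}$ is a subspace hiding obfuscator over $\mathbb{Z}_q$ (its obfuscation of a subspace $A$ computes the indicator $\mathbb{1}_A$ on all inputs except with negligible probability); $(\mathsf{CRSGen},\mathcal{P},\mathcal{V})$ is a (sub-exponentially secure) q-simulation-extractable NIZK for NP with perfect completeness. For a subspace $A\subseteq\mathbb{Z}_q^\lambda$, $|A\rangle=|A|^{-1/2}\sum_{a\in A}|a\rangle$,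 $A^\perp$ is its dual, and $\mathsf{FT}$ is the quantum Fourier transform over $\mathbb{Z}_q^\lambda$ (so $\mathsf{FT}|A\rangle=|A^\perp\rangle$). Scheme: $\mathsf{Setup}(1^\lambda)$: output $\mathsf{crs}\leftarrow\mathsf{CRSGen}(1^{\lambda+n})$. $\mathsf{Gen}(\mathsf{crs})$: choose a uniformly random $\lambda/2$-dimensional subspace $A\subset\mathbb{Z}_q^\lambda$; $\mathsf{sk}=A$. $\mathsf{Lessor}(A,C)$: prepare $|A\rangle$; $\widetilde{C}\leftarrow\mathsf{qIHO}.\mathsf{Obf}(C;r_o)$; $\widetilde{g}\leftarrow\mathsf{shO}(A;r_A)$; $\widetilde{g_\perp}\leftarrow\mathsf{shO}(A^\perp;r_{A^\perp})$; $x=\mathcal{S}(C)$; $\pi\leftarrow\mathcal{P}(\mathsf{crs},(\widetilde{g},\widetilde{g_\perp},\widetilde{C}),(A,r_o,r_A,r_{A^\perp},C,x))$ for the NP relation: $\widetilde{g}=\mathsf{shO}(A;r_A)$, $\widetilde{g_\perp}=\mathsf{shO}(A^\perp;r_{A^\perp})$, $\widetilde{C}=\mathsf{qIHO}.\mathsf{Obf}(C;r_o)$, $C(x)=1$; output $(|A\rangle\langle A|,\widetilde{g},\widetilde{g_\perp},\widetilde{C},\pi)$. $\mathsf{Run}(\mathsf{crs},(\rho,\widetilde{g},\widetilde{g_\perp},\widetilde{C},\pi),x)$: measure the classical registers; apply $|v\rangle|y\rangle\mapsto|v\rangle|y\oplus\widetilde{g}(v)\rangle$ to $\rho\otimes|0\rangle\langle0|$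 and measure the last bit, getting $a$; apply $\mathsf{FT}$ to the post-measurement state, apply $|v\rangle|y\rangle\mapsto|v\rangle|y\oplus\widetilde{g_\perp}(v)\rangle$ with a fresh ancilla and measure, getting $b$; apply $\mathsf{FT}$ again to get $\rho''$; compute $c\leftarrow\mathcal{V}(\mathsf{crs},(\widetilde{g},\widetilde{g_\perp},\widetilde{C}),\pi)$; if $a=0$ or $b=0$ or $c=0$ output $\bot$; otherwise output $(\rho'',\widetilde{g},\widetilde{g_\perp},\widetilde{C},\pi)$ and $y=\mathsf{qIHO}.\mathsf{Eval}(\widetilde{C},x)$. $\mathsf{Check}(A,(\rho,\dots))$: measure $\{|A\rangle\langle A|,I-|A\rangle\langle A|\}$ on $\rho$ and output $1$ iff the outcome is $|A\rangle\langle A|$. *)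

From HB Require Import structures.
From mathcomp Require Import all_boot all_order all_algebra all_field.
Set Implicit Arguments. Unset Strict Implicit. Unset Printing Implicit Defensive.
Import Order.TTheory GRing.Theory Num.Theory.
Local Open Scope ring_scope.

Definition Ex (T : finType) (f : T -> algC) : algC :=
  (#|T|%:R)^-1 * \sum_(t : T) f t.
Definition ExS (T : finType) (S : {set T}) (f : T -> algC) : algC :=
  (#|S|%:R)^-1 * \sum_(t in S) f t.
Definition PrU (T : finType) (E : pred T) : algC := Ex (fun t => (E t)%:R).

Definition coins (k : nat) : finType := (k.-tuple bool)%type.

Definition negligible (f : nat -> algC) : Prop :=
  forall c : nat, exists N : nat, forall lam : nat, (N <= lam)%N ->
    `|f lam| <= ((lam ^ c)%N%:R)^-1.

Definition vec (q lam : nat) : finType := 'rV['F_q]_lam.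
Definition dotv (q lam : nat) (u v : vec q lam) : 'F_q := (u *m v^T) 0 0.
Definition rowspace_set (q lam : nat) (M : 'M['F_q]_lam) : {set vec q lam} :=
  [set v : vec q lam | (v <= M)%MS].
Definition subspaces (q lam d : nat) : {set {set vec q lam}} :=
  [set rowspace_set M | M in [set M : 'M['F_q]_lam | \rank M == d]].
Definition is_subspace (q lam : nat) (A : {set vec q lam}) : bool :=
  [exists M : 'M['F_q]_lam, A == rowspace_set M].
Definition perp (q lam : nat) (A : {set vec q lam}) : {set vec q lam} :=
  [set w : vec q lam | [forall a in A, dotv a w == 0]].

(* a fixed primitive q-th root of unity (for q > 0), used by FT *)
Definition omega (q : nat) : algC := sval (C_prim_root_exists (ltn0Sn q.-1)).
(* operators (density matrices) on the Hilbert space with basis T *)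
Definition op (T : finType) := T -> T -> algC.
Definition ket_set (T : finType) (A : {set T}) (v : T) : algC :=
  if v \in A then (sqrtC (#|A|%:R))^-1 else 0.
Definition ketbra (T : finType) (psi : T -> algC) : op T :=
  fun u v => psi u * (psi v)^*.
Definition FT (q lam : nat) : op (vec q lam) :=
  fun u s => (sqrtC ((q ^ lam)%N%:R))^-1 * omega q ^+ (nat_of_ord (dotv u s)).
Definition conj_by (T : finType) (U : op T) (rho : op T) : op T :=
  fun u v => \sum_(s : T) \sum_(t : T) U u s * rho s t * (U v t)^*.
(* Pi rho Pi for the projector Pi onto span{|v> : g v} (unnormalized
   post-measurement state for outcome 1 when measuring the ancilla after
   |v>|y> -> |v>|y xor g(v)>) *)
Definition proj_by (T : finType) (g : pred T) (rho : op T) : op T :=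
  fun u v => (g u)%:R * rho u v * (g v)%:R.
Definition prob1 (T : finType) (g : pred T) (rho : op T) : algC :=
  \sum_(u : T) (g u)%:R * rho u u.
Definition expect (T : finType) (psi : T -> algC) (rho : op T) : algC :=
  \sum_(u : T) \sum_(v : T) (psi u)^* * rho u v * psi v.

Record SSLPrims := {
  qf : nat -> nat;
  nin : nat -> nat;
  Circ : nat -> Type;
  circ_eval : forall lam, Circ lam -> (nin lam).-tuple bool -> bool;
  s_len : nat -> nat;
  search : forall lam, Circ lam -> coins (s_len lam) -> (nin lam).-tuple bool;
  OProg : nat -> Type;
  o_len : nat -> nat;
  obf : forall lam, Circ lam -> coins (o_len lam) -> OProg lam;
  oeval : forall lam, OProg lam -> (nin lam).-tuple bool -> bool;
  SProg : nat -> Type;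
  sh_len : nat -> nat;
  sho : forall lam, {set vec (qf lam) lam} -> coins (sh_len lam) -> SProg lam;
  sheval : forall lam, SProg lam -> vec (qf lam) lam -> bool;
  CRS : nat -> Type;
  crs_len : nat -> nat;
  crsgen : forall lam, coins (crs_len lam) -> CRS lam;
  NProof : nat -> Type;
  p_len : nat -> nat;
  prove : forall lam, CRS lam -> (SProg lam * SProg lam * OProg lam)%type ->
    ({set vec (qf lam) lam} * coins (o_len lam) * coins (sh_len lam) *
       coins (sh_len lam) * Circ lam * (nin lam).-tuple bool)%type ->
    coins (p_len lam) -> NProof lam;
  verify : forall lam, CRS lam -> (SProg lam * SProg lam * OProg lam)%type ->
    NProof lam -> bool
}.

Section Scheme.
Variable P : SSLPrims.

Definition V (lam : nat) : finType := vec (qf P lam) lam.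
Definition Stmt (lam : nat) : Type := (SProg P lam * SProg P lam * OProg P lam)%type.
Definition Wit (lam : nat) : Type :=
  ({set V lam} * coins (o_len P lam) * coins (sh_len P lam) *
   coins (sh_len P lam) * Circ P lam * (nin P lam).-tuple bool)%type.

Definition ssl_rel (lam : nat) (st : Stmt lam) (w : Wit lam) : Prop :=
  let: (A, ro, rA, rAp, C, x) := w in
  st = (sho A rA, sho (perp A) rAp, obf C ro) /\ circ_eval C x = true.

Definition prims_ok : Prop :=
  (* q prime, so that Z_q = 'F_q is a field *)
  (forall lam, prime (qf P lam)) /\
  (forall lam (C : Circ P lam) r, circ_eval C (search C r) = true) /\
  (forall lam (C : Circ P lam) r x, oeval (obf C r) x = circ_eval C x) /\
  (exists nu : nat -> algC, negligible nu /\
     forall lam (A : {set V lam}), is_subspace A ->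
       PrU (fun r : coins (sh_len P lam) =>
              [exists v : V lam, sheval (sho A r) v != (v \in A)]) <= nu lam) /\
  (forall lam (rc : coins (crs_len P lam)) (st : Stmt lam) (w : Wit lam),
     ssl_rel st w -> forall rp : coins (p_len P lam),
       verify (crsgen rc) st (prove (crsgen rc) st w rp) = true).

(* ----- Run: probability that Run(crs, lease, x) outputs y = C(x) -----
   Run measures a (oracle g~), applies FT, measures b (oracle g~perp); it
   outputs bot unless a = b = c = 1, in which case y = Eval(C~, x). *)
Definition run_ok_prob (lam : nat) (crs : CRS P lam) (rho : op (V lam))
  (gt gpt : SProg P lam) (Ct : OProg P lam) (pi : NProof P lam)
  (y_expected : bool) (x : (nin P lam).-tuple bool) : algC :=
  let g := sheval gt in
  let gp := sheval gpt in
  let pab := prob1 gp (conj_by (@FT (qf P lam) lam) (proj_by g rho)) in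
  let c := verify crs (gt, gpt, Ct) pi in
  pab * (c && (oeval Ct x == y_expected))%:R.

(* Pr over Setup, Gen, Lessor (all coins uniform, A uniform among
   lam/2-dimensional subspaces) and over the quantum measurements of
   independent executions of Run (one per input x) that Run outputs C(x)
   for every x *)
Definition ssl_run_correct_prob (lam : nat) (C : Circ P lam) : algC :=
  Ex (fun rc : coins (crs_len P lam) =>
  let crs := crsgen rc in
  ExS (subspaces (qf P lam) lam lam./2) (fun A : {set V lam} =>
  Ex (fun ro : coins (o_len P lam) =>
  Ex (fun rA : coins (sh_len P lam) =>
  Ex (fun rAp : coins (sh_len P lam) =>
  Ex (fun rs : coins (s_len P lam) =>
  Ex (fun rp : coins (p_len P lam) =>
    let Ct := obf C ro in
    let gt := sho A rA in
    let gpt := sho (perp A) rAp in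
    let x0 := search C rs in
    let pi := prove crs (gt, gpt, Ct) (A, ro, rA, rAp, C, x0) rp in
    let rho := ketbra (ket_set A) in
    \prod_(x : (nin P lam).-tuple bool)
       run_ok_prob crs rho gt gpt Ct pi (circ_eval C x) x))))))).

Definition ssl_check_prob (lam : nat) (C : Circ P lam) : algC :=
  Ex (fun rc : coins (crs_len P lam) =>
  ExS (subspaces (qf P lam) lam lam./2) (fun A : {set V lam} =>
    expect (ket_set A) (ketbra (ket_set A)))).

Definition ssl_correct (eps : nat -> algC) : Prop :=
  forall lam (C : Circ P lam),
    1 - eps lam <= ssl_run_correct_prob C /\ 1 - eps lam <= ssl_check_prob C.

End Scheme.

(* On exact oracles Run succeeds with certainty: |A> passes the A-membership
   test, its Fourier transform gives every u in perp A the amplitude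
   |A| / sqrt(|A| q^lam), so it passes the perp A test, the NIZK proof
   verifies by perfect completeness, and Eval returns C(x) by perfect
   correctness.  Hence Run can fail only when one of the two subspace
   obfuscations errs somewhere, which by a union bound has probability at most
   2 nu.  Check always accepts because |A> is a unit vector. *)

From HB Require Import structures.
From mathcomp Require Import all_boot all_order all_algebra all_field.
From mathcomp Require Import ring.

Set Implicit Arguments.
Unset Strict Implicit.
Unset Printing Implicit Defensive.

Import Order.TTheory GRing.Theory Num.Theory.
Local Open Scope ring_scope.

Lemma coins_gt0 k : (0 < #|coins k|)%N.
Proof. by apply/card_gt0P; exists [tuple of nseq k false]. Qed.

#[local] Hint Resolve coins_gt0 : core.

Lemma ExE (T : finType) (f : T -> algC) : Ex f = ExS [set: T] f.
Proof. by rewrite /Ex /ExS cardsT; congr (_ * _); apply: eq_bigl => t; rewrite inE. Qed.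

Lemma eq_Ex (T : finType) (f g : T -> algC) : f =1 g -> Ex f = Ex g.
Proof. by move=> fg; rewrite /Ex; congr (_ * _); apply: eq_bigr => t _. Qed.

Lemma ler_Ex (T : finType) (f g : T -> algC) : (forall t, f t <= g t) -> Ex f <= Ex g.
Proof. by move=> fg; rewrite /Ex ler_wpM2l ?invr_ge0 ?ler0n // ler_sum. Qed.

Lemma ExS_ge (T : finType) (S : {set T}) (f : T -> algC) c :
  (0 < #|S|)%N -> {in S, forall t, c <= f t} -> c <= ExS S f.
Proof.
move=> S_gt0 cf; have S_pos : 0 < (#|S|%:R : algC) by rewrite ltr0n.
rewrite /ExS -(ler_pM2l S_pos) mulrA mulfV ?gt_eqF // mul1r.
by rewrite mulr_natl -sumr_const ler_sum.
Qed.

Lemma Ex_ge (T : finType) (f : T -> algC) c :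
  (0 < #|T|)%N -> (forall t, c <= f t) -> c <= Ex f.
Proof. by move=> T_gt0 cf; rewrite ExE; apply: ExS_ge => [|t _]; rewrite ?cardsT. Qed.

Lemma Ex_constB (T : finType) c (f : T -> algC) :
  (0 < #|T|)%N -> Ex (fun t => c - f t) = c - Ex f.
Proof.
move=> T_gt0; rewrite /Ex sumrB sumr_const mulrBr -[c *+ _]mulr_natl mulrA mulVf ?mul1r //.
by rewrite pnatr_eq0 -lt0n.
Qed.

Lemma PrU_ge0 (T : finType) (E : pred T) : (0 < #|T|)%N -> 0 <= PrU E.
Proof. by move=> T_gt0; apply: Ex_ge => // t; rewrite ler0n. Qed.

Lemma union_bound2 (T1 T2 : finType) (E1 : pred T1) (E2 : pred T2) e1 e2
    (f : T1 -> T2 -> algC) :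
  PrU E1 <= e1 -> PrU E2 <= e2 -> (0 < #|T1|)%N -> (0 < #|T2|)%N ->
  (forall t1 t2, 0 <= f t1 t2) ->
  (forall t1 t2, ~~ E1 t1 -> ~~ E2 t2 -> 1 <= f t1 t2) ->
  1 - e1 - e2 <= Ex (fun t1 => Ex (fun t2 => f t1 t2)).
Proof.
move=> E1_le E2_le T1_gt0 T2_gt0 f_ge0 f_good.
have f_ge t1 t2 : 1 - (E1 t1)%:R - (E2 t2)%:R <= f t1 t2.
  case: (boolP (E1 t1)) => [_|E1n]; last case: (boolP (E2 t2)) => [_|E2n].
  - by apply: le_trans _ (f_ge0 t1 t2); rewrite subrr sub0r oppr_le0 ler0n.
  - by apply: le_trans _ (f_ge0 t1 t2); rewrite subr0 subrr.
  - by rewrite !subr0 f_good.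
apply: le_trans (ler_Ex (fun t1 => ler_Ex (f_ge t1))).
rewrite (@eq_Ex _ _ (fun t1 => (1 - PrU E2) - (E1 t1)%:R)) => [|t1].
  by rewrite Ex_constB // -/(PrU E1) addrAC lerB // lerB.
by rewrite Ex_constB // -/(PrU E2) addrAC.
Qed.

Lemma negligibleMn (nu : nat -> algC) k :
  negligible nu -> negligible (fun lam => nu lam *+ k).
Proof.
move=> nu_negl c; have [N hN] := nu_negl c.+1; exists (maxn N k.+1) => lam.
rewrite geq_max => /andP[N_le k_lt].
have lam_pos : 0 < (lam%:R : algC) by rewrite ltr0n (leq_trans _ k_lt).
rewrite normrMn; apply: le_trans (_ : ((lam ^ c.+1)%N%:R)^-1 *+ k <= _).
  by rewrite lerMn2r hN ?orbT.
rewrite expnSr natrM invfM -mulrnAr ler_piMr ?invr_ge0 ?ler0n //.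
by rewrite -mulr_natr mulrC ler_pdivrMr // mul1r ler_nat ltnW.
Qed.

Lemma card_rowspace q lam (M : 'M['F_q]_lam) : prime q ->
  #|rowspace_set M| = (q ^ \rank M)%N.
Proof.
move=> q_prime; rewrite -[X in (X ^ _)%N]card_Fp // -[\rank M]mul1n -card_mx.
have mulB_inj : injective (mulmxr (row_base M) : 'rV_(\rank M) -> 'rV_lam).
  have /row_freeP[B' BK] := row_base_free M.
  by apply: can_inj (mulmxr B') _ => u; rewrite /= -mulmxA BK mulmx1.
rewrite -(card_image mulB_inj); apply: eq_card => v.
by rewrite inE -(eq_row_base M) (sameP submxP codomP).
Qed.

Lemma rowspace_set_gt0 q lam (M : 'M['F_q]_lam) : (0 < #|rowspace_set M|)%N.
Proof. by apply/card_gt0P; exists 0; rewrite inE sub0mx. Qed.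

Lemma subspaces_gt0 q lam d : (d <= lam)%N -> (0 < #|subspaces q lam d|)%N.
Proof.
move=> d_le; apply/card_gt0P; exists (rowspace_set (pid_mx d : 'M['F_q]_lam)).
by apply/imsetP; exists (pid_mx d); rewrite // inE rank_pid_mx.
Qed.

Lemma dotvC q lam (u v : vec q lam) : dotv u v = dotv v u.
Proof. by rewrite /dotv -{1}[u]trmxK -trmx_mul mxE. Qed.

Lemma perp_rowspace q lam (M : 'M['F_q]_lam) :
  perp (rowspace_set M) = rowspace_set (kermx M^T).
Proof.
apply/setP => w; rewrite !inE sub_kermx.
apply/forallP/eqP => [w_perp | wM0 a].
  apply/matrixP => i j; rewrite ord1 [RHS]mxE.
  have := w_perp (row j M); rewrite inE row_sub /= /dotv => /eqP <-.
  by rewrite !mxE; apply: eq_bigr => k _; rewrite !mxE mulrC.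
apply/implyP; rewrite inE => /submxP[x ->].
by rewrite /dotv -mulmxA -[M]trmxK -trmx_mul wM0 trmx0 mulmx0 mxE.
Qed.

Lemma card_rowspace_perp q lam (M : 'M['F_q]_lam) : prime q ->
  (#|rowspace_set M| * #|perp (rowspace_set M)|)%N = (q ^ lam)%N.
Proof.
move=> q_prime; rewrite perp_rowspace !card_rowspace // mxrank_ker mxrank_tr.
by rewrite -expnD subnKC // rank_leq_row.
Qed.

Lemma prob1_proj_ketbra (T : finType) (U : op T) (g gp : pred T) (psi : T -> algC) :
  prob1 gp (conj_by U (proj_by g (ketbra psi))) =
  \sum_u (gp u)%:R * `|\sum_s U u s * ((g s)%:R * psi s)| ^+ 2.
Proof.
apply: eq_bigr => u _; rewrite normCK; congr (_ * _).
rewrite rmorph_sum mulr_suml; apply: eq_bigr => s _.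
rewrite mulr_sumr; apply: eq_bigr => t _.
by rewrite /proj_by /ketbra !rmorphM /= !conjC_nat; ring.
Qed.

Lemma prob1_proj_ketbra_ge0 (T : finType) (U : op T) (g gp : pred T) (psi : T -> algC) :
  0 <= prob1 gp (conj_by U (proj_by g (ketbra psi))).
Proof.
by rewrite prob1_proj_ketbra sumr_ge0 // => u _; rewrite mulr_ge0 ?ler0n ?exprn_ge0.
Qed.

Lemma expect_ketbra (T : finType) (psi : T -> algC) :
  expect psi (ketbra psi) = (\sum_u `|psi u| ^+ 2) ^+ 2.
Proof.
rewrite expr2 mulr_suml; apply: eq_bigr => u _.
rewrite mulr_sumr; apply: eq_bigr => v _.
by rewrite /ketbra !normCK; ring.
Qed.

Lemma ket_set_ge0 (T : finType) (A : {set T}) v : 0 <= ket_set A v.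
Proof. by rewrite /ket_set; case: ifP; rewrite ?invr_ge0 ?sqrtC_ge0 ?ler0n. Qed.

Lemma sum_ket_set_sq (T : finType) (A : {set T}) :
  (0 < #|A|)%N -> \sum_v `|ket_set A v| ^+ 2 = 1.
Proof.
move=> A_gt0; rewrite (bigID (mem A)) /= [X in _ + X]big1 ?addr0 => [|v /negbTE vA].
  rewrite (eq_bigr (fun _ => (#|A|%:R)^-1)) => [|v vA].
    by rewrite sumr_const -[_ *+ _]mulr_natr mulVf // pnatr_eq0 -lt0n.
  by rewrite ger0_norm ?ket_set_ge0 // /ket_set vA exprVn sqrtCK.
by rewrite /ket_set vA normr0 expr0n.
Qed.

Lemma expect_ket_set (T : finType) (A : {set T}) :
  (0 < #|A|)%N -> expect (ket_set A) (ketbra (ket_set A)) = 1.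
Proof. by move=> A_gt0; rewrite expect_ketbra sum_ket_set_sq // expr1n. Qed.

Lemma FT_ket_set_perp q lam (A : {set vec q lam}) (g : pred (vec q lam)) u :
  (forall v, g v = (v \in A)) -> u \in perp A ->
  `|\sum_s FT u s * ((g s)%:R * ket_set A s)| ^+ 2 = #|A|%:R / (q ^ lam)%N%:R.
Proof.
move=> gA u_perp; set a : algC := #|A|%:R; set N : algC := (q ^ lam)%N%:R.
have -> : \sum_s FT u s * ((g s)%:R * ket_set A s) = a * (sqrtC N)^-1 * (sqrtC a)^-1.
  rewrite (bigID (mem A)) /= [X in _ + X]big1 ?addr0 => [|s /negbTE sA]; last first.
    by rewrite gA sA mul0r mulr0.
  rewrite (eq_bigr (fun _ => (sqrtC N)^-1 * (sqrtC a)^-1)) => [|s sA].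
    by rewrite sumr_const -mulr_natl mulrA.
  have us0 : dotv u s = 0 by move: u_perp; rewrite inE dotvC => /forall_inP/(_ s sA)/eqP.
  by rewrite gA sA /ket_set sA mul1r /FT us0 expr0 mulr1.
rewrite ger0_norm ?mulr_ge0 ?invr_ge0 ?sqrtC_ge0 ?ler0n //.
have [->|a_neq0] := eqVneq a 0; first by rewrite !mul0r expr0n.
by rewrite !exprMn !exprVn !sqrtCK mulrAC expr2 mulfK.
Qed.

(* Only the amplitudes on perp A are computed: since |A| |perp A| = q^lam they
   already carry the whole mass. *)
Lemma prob1_FT_subspace_state q lam (M : 'M['F_q]_lam) (g gp : pred (vec q lam)) :
  prime q -> (forall v, g v = (v \in rowspace_set M)) ->
  (forall v, gp v = (v \in perp (rowspace_set M))) ->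
  prob1 gp (conj_by (@FT q lam) (proj_by g (ketbra (ket_set (rowspace_set M))))) = 1.
Proof.
move=> q_prime gA gpA; set A := rowspace_set M.
rewrite prob1_proj_ketbra (bigID gp) /= [X in _ + X]big1 ?addr0 => [|u /negbTE gpu]; last first.
  by rewrite gpu mul0r.
rewrite (eq_bigr (fun _ => #|A|%:R / (q ^ lam)%N%:R)) => [|u gpu]; last first.
  by rewrite gpu mul1r FT_ket_set_perp // -gpA.
rewrite (eq_bigl (mem (perp A))) // sumr_const -mulrnAl -[_ *+ #|perp A|]mulr_natr -natrM.
by rewrite card_rowspace_perp // mulfV // pnatr_eq0 -lt0n expn_gt0 prime_gt0.
Qed.

Lemma is_subspace_rowspace q lam (M : 'M['F_q]_lam) : is_subspace (rowspace_set M).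
Proof. by apply/existsP; exists M. Qed.

Lemma is_subspace_perp q lam (M : 'M['F_q]_lam) : is_subspace (perp (rowspace_set M)).
Proof. by rewrite perp_rowspace is_subspace_rowspace. Qed.

Lemma run_ok_prob_ge0 (P : SSLPrims) lam crs (psi : V P lam -> algC) gt gpt Ct pi y x :
  0 <= run_ok_prob crs (ketbra psi) gt gpt Ct pi y x.
Proof. by rewrite mulr_ge0 ?ler0n ?prob1_proj_ketbra_ge0. Qed.

Lemma run_ok_prob_honest (P : SSLPrims) lam crs (M : 'M['F_(qf P lam)]_lam)
    gt gpt Ct pi y x :
  prime (qf P lam) ->
  (forall v, sheval gt v = (v \in rowspace_set M)) ->
  (forall v, sheval gpt v = (v \in perp (rowspace_set M))) ->
  verify crs (gt, gpt, Ct) pi -> oeval Ct x = y ->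
  run_ok_prob crs (ketbra (ket_set (rowspace_set M))) gt gpt Ct pi y x = 1.
Proof.
move=> q_prime gtA gptA pi_ok Ct_x.
by rewrite /run_ok_prob /= pi_ok Ct_x eqxx mulr1 prob1_FT_subspace_state.
Qed.

Theorem lemma54 (P : SSLPrims) :
  prims_ok P -> exists eps : nat -> algC, negligible eps /\ ssl_correct P eps.
Proof.
move=> [q_prime [searchable [obf_correct [[nu [nu_negl sho_correct]] complete]]]].
exists (fun lam => nu lam *+ 2); split; first exact: negligibleMn.
move=> lam C; rewrite mulr2n opprD addrA.
have half_le : (lam./2 <= lam)%N by rewrite -divn2 leq_div.
split; apply: Ex_ge => // rc; apply: ExS_ge => [|_ /imsetP[M _ ->]];
  rewrite ?subspaces_gt0 //; set A := rowspace_set M.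
- have errA := sho_correct lam A (is_subspace_rowspace M).
  have errP := sho_correct lam (perp A) (is_subspace_perp M).
  apply: Ex_ge => // ro; apply: union_bound2 errA errP _ _ _ _ => // [rA rAp|rA rAp].
    by do 2 apply: Ex_ge => // ?; apply: prodr_ge0 => x _; apply: run_ok_prob_ge0.
  move=> /existsPn shoA /existsPn shoP; apply: Ex_ge => // rs; apply: Ex_ge => // rp /=.
  rewrite big1 // => x _; apply: run_ok_prob_honest => //.
  + by move=> v; apply/eqP/negPn/shoA.
  + by move=> v; apply/eqP/negPn/shoP.
  + by apply: complete; split; last apply: searchable.
- have nu_ge0 : 0 <= nu lam.
    exact: le_trans (PrU_ge0 _ (coins_gt0 _)) (sho_correct lam A (is_subspace_rowspace M)).
  by rewrite expect_ket_set ?rowspace_set_gt0 // -addrA -opprD lerBlDr lerDl addr_ge0.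
Qed.
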